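(* Let $S$ be a quasi-thin scheme on $X$. Then the $\mathbb F$-dimension of the Terwilliger $\mathbb F$-algebra $\mathcal T(y)$ of $S$ with respect to $y$ does not depend on the characteristic of the field $\mathbb F$ nor on the choice of the vertex $y\in X$.
   Context: Let $X$ be a nonempty finite set. A scheme of class $d$ on $X$ is a partition $S=\{R_0,\dots,R_d\}$ of $X\times X$ into nonempty sets such that $R_0=\{(b,b):b\in X\}$; for each $c$ there is $c'$ with $R_{c'}=\{(f,e):(e,f)\in R_c\}$; and for all $i,j,k$ the intersection number $p_{ij}^k=|\{\ell\in X:(m,\ell)\in R_i,(\ell,n)\in R_j\}|$ does not depend on $(m,n)\in R_k$. The valency is $k_a=p_{aa'}^0$; quasi-thin means all $k_a\le 2$. For a field $\mathbb F$ and $y\in X$, $yR_a=\{z:(y,z)\in R_a\}$, $A_a\in M_X(\mathbb F)$ is the $(0,1)$ adjacency matrix of $R_a$, $E_a^*(y)$ is the diagonal $(0,1)$-matrix with ones exactly at positions indexed by $yR_a$, and $\mathcal T(y)$ is the $\mathbb F$-subalgebra of $M_X(\mathbb F)$ generated by $A_0,\dots,A_d,E_0^*(y),\dots,E_d^*(y)$. *)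

From HB Require Import structures.
From mathcomp Require Import all_boot all_order all_algebra all_field.
Set Implicit Arguments. Unset Strict Implicit. Unset Printing Implicit Defensive.
Import GRing.Theory.
Local Open Scope ring_scope.

(* A partition S = {R_0,...,R_d} of X x X is encoded by the map
   r : X -> X -> 'I_d.+1 with (e,f) \in R_a  <->  r e f = a. *)

Definition is_transpose (X : finType) (d : nat) (r : X -> X -> 'I_d.+1)
  (c c' : 'I_d.+1) : Prop :=
  forall e f : X, (r e f == c') = (r f e == c).

Definition is_scheme (X : finType) (d : nat) (r : X -> X -> 'I_d.+1) : Prop :=
  [/\
      forall a : 'I_d.+1, exists e f : X, r e f = a,
      forall e f : X, (r e f == ord0) = (e == f),
      forall c : 'I_d.+1, exists c' : 'I_d.+1, is_transpose r c c' &
      forall (i j k : 'I_d.+1) (m n m' n' : X), r m n = k -> r m' n' = k ->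
        #|[set l | (r m l == i) && (r l n == j)]|
        = #|[set l | (r m' l == i) && (r l n' == j)]| ].

(* quasi-thin: every valency k_a = p_{a a'}^0 (computed at any (m,m) in R_0) is <= 2 *)
Definition quasi_thin (X : finType) (d : nat) (r : X -> X -> 'I_d.+1) : Prop :=
  forall a a' : 'I_d.+1, is_transpose r a a' ->
    forall m : X, (#|[set l | (r m l == a) && (r l m == a')]| <= 2)%N.

(* rows/columns of matrices in M_X(F) are indexed through the enumeration of X;
   the matrix size #|X|.-1.+1 equals #|X| since X is nonempty. *)
Definition idxX (X : finType) (x0 : X) (i : nat) : X := nth x0 (enum X) i.

Definition adjmx (F : fieldType) (X : finType) (x0 : X) (d : nat)
  (r : X -> X -> 'I_d.+1) (a : 'I_d.+1) : 'M[F]_(#|X|.-1.+1) :=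
  \matrix_(i, j) ((r (idxX x0 i) (idxX x0 j) == a)%:R : F).

Definition dualidem (F : fieldType) (X : finType) (d : nat)
  (r : X -> X -> 'I_d.+1) (y : X) (a : 'I_d.+1) : 'M[F]_(#|X|.-1.+1) :=
  \matrix_(i, j) (((i == j) && (r y (idxX y i) == a))%:R : F).

Definition terwilliger (F : fieldType) (X : finType) (d : nat)
  (r : X -> X -> 'I_d.+1) (y : X) : {vspace 'M[F]_(#|X|.-1.+1)} :=
  agenv (<< [seq adjmx F y r a | a <- enum 'I_d.+1]
           ++ [seq dualidem F r y a | a <- enum 'I_d.+1] >>)%VS.

Definition terwilliger_dim (F : fieldType) (X : finType) (d : nat)
  (r : X -> X -> 'I_d.+1) (y : X) : nat := \dim (terwilliger F r y).

From mathcomp Require Import all_boot all_order all_algebra all_field.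
Import GRing.Theory.
Set Implicit Arguments. Unset Strict Implicit. Unset Printing Implicit Defensive.

(* Quasi-thinness makes every fibre yR_a a set of one or two points,
   and exchanging the two points of every fibre (the map [mate y]) is an
   automorphism of the scheme, because u and mate u are in the same relation
   to y, so the intersection numbers force them to see v alike.  Call fibres a and c linked when some
   u in yR_a is in different relations to the two points of yR_c, and (a, c)
   twisted when both have valency 2 and a chain of links leads from a to c.
   Every generator of T(y), hence every element, is invariant under mating both
   indices and, on untwisted blocks, under mating the column index alone.  Such
   matrices are spanned by the all-ones blocks E*_a J E*_c of untwisted pairs
   and the two perfect matchings between yR_a and yR_c of twisted pairs; these
   lie in T(y), since E*_a A_b E*_c is a matching when a and c are linked and
   products along a chain of links give the others.  Hence
   dim T(y) = (d+1)^2 + #{twisted (a, c)}, and twistedness is expressed through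
   intersection numbers only, so it depends neither on y nor on the field. *)

Section QuasiThinScheme.
Variables (X : finType) (d : nat) (r : X -> X -> 'I_d.+1).
Hypothesis schemeS : is_scheme r.
Hypothesis qthinS : quasi_thin r.

Lemma rel_diag u v : (r u v == ord0) = (u == v).
Proof. by case: schemeS. Qed.

Lemma rel_refl u : r u u = ord0.
Proof. by apply/eqP; rewrite rel_diag. Qed.

Lemma exists_transpose c : exists c', is_transpose r c c'.
Proof. by case: schemeS => _ _ + _; apply. Qed.

Definition inter_num m n i j := #|[set l | (r m l == i) && (r l n == j)]|.

Lemma inter_num_reg m n m' n' i j :
  r m n = r m' n' -> inter_num m n i j = inter_num m' n' i j.
Proof. by case: schemeS => _ _ _ + E; apply. Qed.

Lemma card_out_reg y u y' u' c b : r y u = r y' u' ->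
  #|[set w | (r y w == c) && (r u w == b)]| = #|[set w | (r y' w == c) && (r u' w == b)]|.
Proof.
have [b' tb] := exists_transpose b.
have out_inter z x : #|[set w | (r z w == c) && (r x w == b)]| = inter_num z x c b'.
  by apply: eq_card => w; rewrite !inE tb.
by move=> E; rewrite !out_inter; apply: inter_num_reg.
Qed.

Definition valency y a := #|[set v | r y v == a]|.

Lemma valency_inter_num y a a' : is_transpose r a a' -> valency y a = inter_num y y a a'.
Proof. by move=> ta; apply: eq_card => l; rewrite !inE ta andbb. Qed.

Lemma valency_indep y y' a : valency y a = valency y' a.
Proof.
have [a' ta] := exists_transpose a.
by rewrite !(valency_inter_num _ ta); apply: inter_num_reg; rewrite !rel_refl.
Qed.

Lemma valency_le2 y a : valency y a <= 2.
Proof. by have [a' ta] := exists_transpose a; rewrite (valency_inter_num _ ta); apply: qthinS. Qed.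

Lemma fiber_nonempty y a : exists u, r y u = a.
Proof.
case: schemeS => + _ _ _ => /(_ a)[e [f ef]].
have : 0 < valency e a by apply/card_gt0P; exists f; rewrite inE ef.
by rewrite (valency_indep e y) => /card_gt0P[u]; rewrite inE => /eqP; exists u.
Qed.

Definition mate y u := odflt u [pick w | (r y w == r y u) && (w != u)].

Lemma rel_mate y u : r y (mate y u) = r y u.
Proof. by rewrite /mate; case: pickP => //= w /andP[/eqP]. Qed.

Lemma fiberP y u w : r y w = r y u -> w = u \/ w = mate y u.
Proof.
move=> E; have [->|nwu] := eqVneq w u; first by left.
right; rewrite /mate; case: pickP => [w0 /andP[/eqP E0 n0] /=|/(_ w)]; last first.
  by rewrite E eqxx nwu.
apply/eqP; apply/negP => nww0.
have sub : [set u; w; w0] \subset [set v | r y v == r y u].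
  by apply/subsetP => z; rewrite !inE => /orP[/orP[]|] /eqP ->; rewrite ?E ?E0 eqxx.
have := leq_trans (subset_leq_card sub) (valency_le2 y (r y u)).
rewrite setUC cardsU1 cards2 !inE (negbTE n0) [u == w]eq_sym (negbTE nwu).
by rewrite eq_sym (negbTE (introN idP nww0)).
Qed.

Lemma mate_fixed y v w : mate y v = v -> r y w = r y v -> w = v.
Proof. by move=> mv /fiberP[|->]. Qed.

Lemma mateK y : involutive (mate y).
Proof.
move=> u; have [E|ne] := eqVneq (mate y u) u; first by rewrite E E.
have : r y (mate y (mate y u)) = r y u by rewrite !rel_mate.
case/fiberP => // E.
by have /eqP := mate_fixed E (esym (rel_mate y u)); rewrite eq_sym (negbTE ne).
Qed.

Lemma mate_inj y : injective (mate y).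
Proof. exact: inv_inj (mateK y). Qed.

Lemma fiber_mate y u : [set v | r y v == r y u] = [set u; mate y u].
Proof.
apply/setP => v; rewrite !inE.
by apply/idP/idP => [/eqP/fiberP[]->|/orP[]/eqP->]; rewrite ?eqxx ?orbT ?rel_mate.
Qed.

Lemma mate_neq y u : (mate y u != u) = (valency y (r y u) == 2).
Proof.
rewrite /valency fiber_mate; have [->|ne] := eqVneq (mate y u) u.
  by rewrite setUid cards1.
by rewrite cards2 [u == _]eq_sym ne.
Qed.

Lemma big_fiber (R : Type) (idx : R) (op : Monoid.com_law idx) (G : X -> R) y v :
  \big[op/idx]_(w | r y w == r y v) G w =
  if mate y v == v then G v else op (G v) (G (mate y v)).
Proof.
rewrite (bigD1 v) //=; case: eqP => [E|/eqP ne].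
  rewrite big_pred0 ?Monoid.mulm1 // => w.
  by apply/negP => /andP[/eqP/fiberP[]->]; rewrite ?E eqxx.
rewrite (bigD1 (mate y v)) /=; last by rewrite rel_mate eqxx ne.
rewrite big_pred0 ?Monoid.mulm1 // => w.
by apply/negP => /andP[/andP[/eqP/fiberP[]->]]; rewrite eqxx.
Qed.

Lemma card_fiber y v (P : pred X) :
  #|[set w | (r y w == r y v) && P w]| =
  if mate y v == v then nat_of_bool (P v) else P v + P (mate y v).
Proof.
rewrite cardsE -sum1_card (eq_bigl (fun w => (r y w == r y v) && P w)) //.
rewrite big_mkcondr /= (eq_bigr (fun w => nat_of_bool (P w))); last by move=> w _; case: (P w).
by rewrite (@big_fiber _ 0 addn).
Qed.

(* Comparing the intersection counts at (u, v) with those at (mate u, v) and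
   (u, mate v) leaves no room for mate to change a relation. *)
Lemma rel_mate_mate y u v : r (mate y u) (mate y v) = r u v.
Proof.
have := card_out_reg (r y v) (r u v) (esym (rel_mate y u)).
have := inter_num_reg (r y u) (r u v) (esym (rel_mate y v)).
rewrite /inter_num !card_fiber eqxx.
have [Eu|Nu] := eqVneq (mate y u) u; have [Ev|Nv] := eqVneq (mate y v) v.
- by rewrite Eu Ev.
- by rewrite Eu eqxx; case: eqP.
- by rewrite Ev eqxx; case: eqP.
- by case: (r u (mate y v) == r u v); case: (r (mate y u) v == r u v);
    case: (r (mate y u) (mate y v) =P r u v).
Qed.

Definition linked y : rel 'I_d.+1 := fun a c =>
  [exists u, exists v, [&& r y u == a, r y v == c & r u v != r u (mate y v)]].

Definition twisted y a c := [&& valency y a == 2, valency y c == 2 & connect (linked y) a c].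

Lemma linked_valency y a c : linked y a c -> (valency y a == 2) && (valency y c == 2).
Proof.
case/existsP => u /existsP[v /and3P[/eqP <- /eqP <- ne]].
have Nv : mate y v != v by apply: contraNneq ne => ->.
rewrite -!mate_neq Nv andbT; apply: contraNneq ne => Eu.
by rewrite -[X in _ == r X _]Eu rel_mate_mate.
Qed.

Lemma linked_refl y a : valency y a == 2 -> linked y a a.
Proof.
have [u <-] := fiber_nonempty y a; rewrite -mate_neq => Nu.
apply/existsP; exists u; apply/existsP; exists u.
by rewrite eqxx rel_refl eq_sym rel_diag eq_sym.
Qed.

Lemma mate_row y u v : ~~ twisted y (r y u) (r y v) -> r u (mate y v) = r u v.
Proof.
move=> ntw; have [->//|Nv] := eqVneq (mate y v) v.
have [Eu|Nu] := eqVneq (mate y u) u; first by rewrite -{1}Eu rel_mate_mate.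
move: ntw; rewrite /twisted -!mate_neq Nu Nv /= => nc.
have : ~~ linked y (r y u) (r y v) by apply: contra nc; exact: connect1.
by move/existsPn/(_ u)/existsPn/(_ v); rewrite !eqxx /= => /negbNE/eqP.
Qed.

Lemma linked_indep1 y y' a c : linked y a c -> linked y' a c.
Proof.
move=> lac; have /andP[_ vc] := linked_valency lac.
move: lac => /existsP[u /existsP[v /and3P[/eqP Eu /eqP Ev ne]]].
have Nv : mate y v != v by apply: contraNneq ne => ->.
have [u' Eu'] := fiber_nonempty y' a; have [v' Ev'] := fiber_nonempty y' c.
have Nv' : mate y' v' != v' by rewrite mate_neq Ev' (valency_indep y' y) -Ev -mate_neq.
move: (card_out_reg c (r u v) (etrans Eu (esym Eu'))).
rewrite -{1}Ev -Ev' !card_fiber (negbTE Nv) (negbTE Nv') eqxx.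
rewrite [r u (mate y v) == _]eq_sym (negbTE ne) Ev' /=.
case E1: (r u' v' == r u v); case E2: (r u' (mate y' v') == r u v) => //= _.
- apply/existsP; exists u'; apply/existsP; exists v'.
  by rewrite Eu' Ev' !eqxx (eqP E1) eq_sym E2.
- apply/existsP; exists u'; apply/existsP; exists (mate y' v').
  by rewrite Eu' rel_mate Ev' !eqxx (eqP E2) mateK eq_sym E1.
Qed.

Lemma twisted_indep y y' a c : twisted y a c = twisted y' a c.
Proof.
have linked_eq : linked y =2 linked y'.
  by move=> a' c'; apply/idP/idP; apply: linked_indep1.
by rewrite /twisted (valency_indep y y' a) (valency_indep y y' c) (eq_connect linked_eq).
Qed.

Lemma twisted_trans y a b c : twisted y a b -> twisted y b c -> twisted y a c.
Proof.
move=> /and3P[va _ ab] /and3P[_ vc bc]; by rewrite /twisted va vc (connect_trans ab bc).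
Qed.


Section TerwilligerAlgebra.
Variables (F : fieldType) (y : X).
Local Open Scope ring_scope.
Local Notation n := #|X|.-1.+1.
Local Notation T := (terwilliger F r y).

Definition vtx (i : 'I_n) : X := idxX y i.
Definition pos (u : X) : 'I_n := inord (index u (enum X)).

Lemma n_eq_card : n = #|X|.
Proof. by rewrite prednK //; apply/card_gt0P; exists y. Qed.

Lemma index_lt_n u : (index u (enum X) < n)%N.
Proof. by rewrite n_eq_card cardE index_mem mem_enum. Qed.

Lemma posK : cancel pos vtx.
Proof. by move=> u; rewrite /vtx /idxX /pos inordK ?index_lt_n // nth_index // mem_enum. Qed.

Lemma vtxK : cancel vtx pos.
Proof.
move=> i; apply: val_inj; rewrite /= inordK ?index_lt_n // /vtx /idxX.
rewrite index_uniq ?enum_uniq //.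
by apply: leq_trans (ltn_ord i) _; rewrite n_eq_card cardE.
Qed.

Definition mx_of (f : X -> X -> F) : 'M[F]_n := \matrix_(i, j) f (vtx i) (vtx j).

Lemma mx_ofE f u v : mx_of f (pos u) (pos v) = f u v.
Proof. by rewrite mxE !posK. Qed.

Lemma eq_mx_of f g : f =2 g -> mx_of f = mx_of g.
Proof. by move=> fg; apply/matrixP => i j; rewrite !mxE fg. Qed.

Lemma mx_of_entries (M : 'M[F]_n) : M = mx_of (fun u v => M (pos u) (pos v)).
Proof. by apply/matrixP => i j; rewrite !mxE !vtxK. Qed.

Lemma mul_mx_of f g : mx_of f * mx_of g = mx_of (fun u v => \sum_w f u w * g w v).
Proof.
apply/matrixP => i j; rewrite -mulmxE !mxE.
rewrite (reindex pos (onW_bij _ (Bijective posK vtxK))) /=.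
by apply: eq_bigr => w _; rewrite !mxE posK.
Qed.

Lemma mulmx_pos (M P : 'M[F]_n) u v :
  (M * P) (pos u) (pos v) = \sum_w M (pos u) (pos w) * P (pos w) (pos v).
Proof.
rewrite [M]mx_of_entries [P]mx_of_entries mul_mx_of mx_ofE.
by apply: eq_bigr => w _; rewrite !mx_ofE.
Qed.

Lemma sum_mx_of (I : finType) (G : I -> X -> X -> F) :
  \sum_i mx_of (G i) = mx_of (fun u v => \sum_i G i u v).
Proof. by apply/matrixP => i j; rewrite summxE !mxE; apply: eq_bigr => k _; rewrite mxE. Qed.

Lemma mx1_pos u v : (1 : 'M[F]_n) (pos u) (pos v) = (u == v)%:R.
Proof. by rewrite mxE (inj_eq (can_inj posK)). Qed.

Lemma adjmxE b : adjmx F y r b = mx_of (fun u v => (r u v == b)%:R).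
Proof. by []. Qed.

Lemma dualidemE a : dualidem F r y a = mx_of (fun u v => ((u == v) && (r y u == a))%:R).
Proof.
apply/matrixP => i j; rewrite !mxE; congr (_ %:R); congr (_ && _).
by apply/eqP/eqP => [->//|E]; rewrite -(vtxK i) -(vtxK j) E.
Qed.

Lemma dualidem_mul a f :
  dualidem F r y a * mx_of f = mx_of (fun u v => (r y u == a)%:R * f u v).
Proof.
rewrite dualidemE mul_mx_of; apply: eq_mx_of => u v.
rewrite (bigD1 u) //= eqxx big1 ?addr0 // => w ne.
by rewrite eq_sym (negbTE ne) mul0r.
Qed.

Lemma mul_dualidem c f :
  mx_of f * dualidem F r y c = mx_of (fun u v => f u v * (r y v == c)%:R).
Proof.
rewrite dualidemE mul_mx_of; apply: eq_mx_of => u v.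
rewrite (bigD1 v) //= eqxx big1 ?addr0 // => w ne.
by rewrite (negbTE ne) mulr0.
Qed.

Lemma adjmx_in_T b : adjmx F y r b \in T.
Proof.
apply: (subvP (sub_agenv _)); apply: memv_span; rewrite mem_cat.
by apply/orP; left; apply/mapP; exists b; rewrite ?mem_enum.
Qed.

Lemma dualidem_in_T a : dualidem F r y a \in T.
Proof.
apply: (subvP (sub_agenv _)); apply: memv_span; rewrite mem_cat.
by apply/orP; right; apply/mapP; exists a; rewrite ?mem_enum.
Qed.

Lemma mul_in_T A B : A \in T -> B \in T -> A * B \in T.
Proof. by move=> AT BT; have := memv_mul AT BT; rewrite agenvM. Qed.

Definition compatible (M : 'M[F]_n) : Prop :=
  (forall u v, M (pos (mate y u)) (pos (mate y v)) = M (pos u) (pos v)) /\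
  (forall u v, ~~ twisted y (r y u) (r y v) ->
     M (pos u) (pos (mate y v)) = M (pos u) (pos v)).

Lemma compatible0 : compatible 0.
Proof. by split=> u v; rewrite !mxE. Qed.

Lemma compatibleD A B : compatible A -> compatible B -> compatible (A + B).
Proof. by move=> [A1 A2] [B1 B2]; split=> u v; rewrite !mxE ?A1 ?B1 // => ?; rewrite A2 ?B2. Qed.

Lemma compatibleZ k A : compatible A -> compatible (k *: A).
Proof. by move=> [A1 A2]; split=> u v; rewrite !mxE ?A1 // => ?; rewrite A2. Qed.

Lemma compatible_span (s : seq 'M[F]_n) :
  {in s, forall M, compatible M} -> forall M, M \in <<s>>%VS -> compatible M.
Proof.
move=> sC M Ms; rewrite (@coord_span _ _ _ (in_tuple s) M Ms).
apply: (big_ind compatible compatible0 compatibleD) => i _; apply/compatibleZ/sC.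
exact: mem_nth.
Qed.

(* Splitting the middle index w according to whether (r y u, r y w) is twisted:
   on twisted w the row condition of B applies, on the others that of A. *)
Lemma compatibleM A B : compatible A -> compatible B -> compatible (A * B).
Proof.
move=> [A1 A2] [B1 B2]; split=> u v.
  rewrite !mulmx_pos (reindex_inj (@mate_inj y)) /=.
  by apply: eq_bigr => w _; rewrite A1 B1.
move=> ntw; rewrite !mulmx_pos.
rewrite (bigID (fun w => twisted y (r y u) (r y w))).
rewrite [RHS](bigID (fun w => twisted y (r y u) (r y w))) /=; congr (_ + _).
  apply: eq_bigr => w tw; rewrite B2 //; apply: contra ntw.
  exact: twisted_trans.
rewrite (eq_bigr (fun w => A (pos u) (pos (mate y w)) * B (pos w) (pos (mate y v)))).
  rewrite (reindex_inj (@mate_inj y)) /=.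
  by apply: eq_big => w; rewrite ?rel_mate // mateK B1.
by move=> w ntw'; rewrite A2.
Qed.

Lemma mate_eq_untwisted u v : ~~ twisted y (r y u) (r y v) -> (u == mate y v) = (u == v).
Proof.
move=> ntw; have [E|ne] := eqVneq (mate y v) v; first by rewrite E.
have twv : twisted y (r y v) (r y v) by rewrite /twisted -mate_neq ne connect0.
case: eqP => [Eu|_]; first by move: ntw; rewrite Eu rel_mate twv.
by case: eqP => [Eu|_] //; move: ntw; rewrite Eu twv.
Qed.

Lemma compatible1 : compatible 1.
Proof.
split=> u v; rewrite !mx1_pos ?(inj_eq (@mate_inj y)) //.
by move=> ntw; rewrite mate_eq_untwisted.
Qed.

Lemma compatible_adjmx b : compatible (adjmx F y r b).
Proof. by rewrite adjmxE; split=> u v; rewrite !mx_ofE ?rel_mate_mate // => /mate_row ->. Qed.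

Lemma compatible_dualidem a : compatible (dualidem F r y a).
Proof.
rewrite dualidemE; split=> u v; rewrite !mx_ofE ?(inj_eq (@mate_inj y)) ?rel_mate //.
by move=> ntw; rewrite mate_eq_untwisted.
Qed.

Definition rep a := odflt y [pick v | r y v == a].
Definition is_rep u := u == rep (r y u).

Lemma rel_rep a : r y (rep a) = a.
Proof.
rewrite /rep; case: pickP => [v /eqP //|/=]; have [u <-] := fiber_nonempty y a.
by move/(_ u); rewrite eqxx.
Qed.

Lemma is_rep_mate u : valency y (r y u) == 2 -> is_rep (mate y u) = ~~ is_rep u.
Proof.
rewrite -mate_neq /is_rep rel_mate => Nu.
have [Eu|ne] := eqVneq u (rep (r y u)).
  by rewrite -Eu (negbTE Nu).
have /fiberP[E|E] : r y (rep (r y u)) = r y u by rewrite rel_rep.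
  by rewrite E eqxx in ne.
by rewrite E eqxx.
Qed.

Lemma eq_in_fiber u u' : valency y (r y u) == 2 -> r y u' = r y u ->
  (u' == u) = (is_rep u' == is_rep u).
Proof.
move=> vu /fiberP[->|->]; first by rewrite !eqxx.
rewrite (is_rep_mate vu); move: vu; rewrite -mate_neq => /negbTE ->.
by case: (is_rep u).
Qed.

(* A cell (a, c, s) is the block yR_a x yR_c when (a, c) is untwisted (then
   s = false), and one of the two matchings of that block when (a, c) is
   twisted; s tells whether the matching pairs representatives with
   non-representatives. *)
Definition cell := ('I_d.+1 * 'I_d.+1 * bool)%type.

Definition cell_of u v : cell :=
  (r y u, r y v, twisted y (r y u) (r y v) && (is_rep u != is_rep v)).

Definition valid_cell (x : cell) := ~~ x.2 || twisted y x.1.1 x.1.2.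

Definition cell_row (x : cell) := rep x.1.1.
Definition cell_col (x : cell) := if x.2 then mate y (rep x.1.2) else rep x.1.2.

Lemma valid_cell_of u v : valid_cell (cell_of u v).
Proof. by rewrite /valid_cell /=; case: twisted; rewrite ?orbT. Qed.

Lemma cell_of_rep x : valid_cell x -> cell_of (cell_row x) (cell_col x) = x.
Proof.
case: x => [[a c] s]; rewrite /valid_cell /cell_of /cell_row /cell_col /=.
case: s => /= [tw|_]; last by rewrite !rel_rep /is_rep !rel_rep !eqxx andbF.
have /and3P[_ vc _] := tw.
rewrite rel_mate !rel_rep tw /is_rep rel_mate !rel_rep eqxx.
by move: vc; rewrite -{1}(rel_rep c) -mate_neq => /negbTE ->.
Qed.

Lemma cell_of_mate u v : cell_of (mate y u) (mate y v) = cell_of u v.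
Proof.
rewrite /cell_of !rel_mate; case tw: twisted => //=.
have /and3P[vu vv _] := tw.
by rewrite (is_rep_mate vu) (is_rep_mate vv); case: (is_rep u); case: (is_rep v).
Qed.

Lemma cell_of_mateR u v : ~~ twisted y (r y u) (r y v) -> cell_of u (mate y v) = cell_of u v.
Proof. by rewrite /cell_of rel_mate => /negbTE ->. Qed.

Lemma compatible_cell M u v u' v' : compatible M ->
  cell_of u' v' = cell_of u v -> M (pos u') (pos v') = M (pos u) (pos v).
Proof.
case=> M_mate M_row E; case: (E) => Eu Ev _.
have [tw|ntw] := boolP (twisted y (r y u) (r y v)).
  have /and3P[vu vv _] := tw.
  move: E; rewrite /cell_of Eu Ev tw /= => -[].
  case/fiberP: Eu => ->; case/fiberP: Ev => ->;
    rewrite ?(is_rep_mate vu) ?(is_rep_mate vv) ?M_mate //;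
    by case: (is_rep u); case: (is_rep v).
have M_col w z : ~~ twisted y (r y w) (r y z) ->
    M (pos (mate y w)) (pos z) = M (pos w) (pos z).
  by move=> ntw'; rewrite -[LHS]M_mate mateK M_row.
case/fiberP: Eu => ->; case/fiberP: Ev => ->; rewrite ?M_col ?M_row ?rel_mate //.
Qed.

Definition cell_mx (x : cell) := mx_of (fun u v => (x == cell_of u v)%:R).

Definition cells := [seq x <- enum {: cell} | valid_cell x].
Definition cell_basis := map cell_mx cells.

Lemma compatible_cell_mx x : compatible (cell_mx x).
Proof.
split=> u v; rewrite !mx_ofE ?cell_of_mate //.
by move=> /cell_of_mateR ->.
Qed.

Lemma compatible_in_span M : compatible M -> M \in <<cell_basis>>%VS.
Proof.
move=> MC.
have -> : M = \sum_(x <- cells) M (pos (cell_row x)) (pos (cell_col x)) *: cell_mx x.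
  apply/matrixP => i j; rewrite -(vtxK i) -(vtxK j); set u := vtx i; set v := vtx j.
  rewrite summxE /cells big_filter big_enum_cond /=.
  rewrite (bigD1 (cell_of u v)) ?valid_cell_of //= big1 ?addr0.
    rewrite !mxE !posK eqxx mulr1; apply: compatible_cell MC _.
    by rewrite cell_of_rep ?valid_cell_of.
  by move=> x /andP[_ ne]; rewrite !mxE !posK (negbTE ne) mulr0.
rewrite big_seq; apply: memv_suml => x xc; apply/memvZ/memv_span.
exact: map_f.
Qed.

Lemma cell_basis_free : free cell_basis.
Proof.
apply/(@freeP _ _ _ (in_tuple cell_basis)) => k k0 i.
have x0 : cell := (ord0, ord0, false).
have lt_cells (j : 'I_(size cell_basis)) : (j < size cells)%N by rewrite -(size_map cell_mx).
have valid_nth (j : 'I_(size cell_basis)) : valid_cell (nth x0 cells j).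
  by have := mem_nth x0 (lt_cells j); rewrite mem_filter => /andP[].
set x := nth x0 cells i.
have := congr1 (fun M : 'M[F]_n => M (pos (cell_row x)) (pos (cell_col x))) k0.
rewrite summxE mxE (bigD1 i) //= big1 ?addr0.
  by rewrite mxE /= (nth_map x0) // mx_ofE cell_of_rep ?valid_nth // eqxx mulr1.
move=> j ne; rewrite mxE /= (nth_map x0) // mx_ofE cell_of_rep ?valid_nth //.
have cells_uniq : uniq cells by rewrite filter_uniq // enum_uniq.
rewrite nth_uniq //.
by move: ne; rewrite -val_eqE => /negbTE ->; rewrite mulr0.
Qed.

Lemma T_sub_span_cells : (T <= <<cell_basis>>)%VS.
Proof.
have basisC : {in cell_basis, forall M, compatible M}.
  by move=> M /mapP[x _ ->]; apply: compatible_cell_mx.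
apply: agenv_sub_modl; first by rewrite -memvE; apply/compatible_in_span/compatible1.
apply/prodvP => A B AC BC; apply/compatible_in_span/compatibleM; last first.
  exact: compatible_span basisC _ BC.
apply: compatible_span AC => G; rewrite mem_cat => /orP[] /mapP[a _ ->].
  exact: compatible_adjmx.
exact: compatible_dualidem.
Qed.

Definition ones_block a c := mx_of (fun u v => ((r y u == a) && (r y v == c))%:R).

Definition in_matching a c s u v :=
  [&& r y u == a, r y v == c & (is_rep u != is_rep v) == s].
Definition matching a c s := mx_of (fun u v => (in_matching a c s u v)%:R).

Lemma ones_block_in_T a c : ones_block a c \in T.
Proof.
have -> : ones_block a c = \sum_b dualidem F r y a * adjmx F y r b * dualidem F r y c.
  rewrite (eq_bigr (fun b => mx_of (fun u v =>
             (r y u == a)%:R * (r u v == b)%:R * (r y v == c)%:R))); last first.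
    by move=> b _; rewrite adjmxE dualidem_mul mul_dualidem.
  rewrite sum_mx_of; apply: eq_mx_of => u v.
  rewrite (bigD1 (r u v)) //= eqxx big1 ?addr0; last first.
    by move=> b ne; rewrite [_ == b]eq_sym (negbTE ne) mulr0 mul0r.
  by case: (r y u == a); case: (r y v == c); rewrite /= ?mulr1 ?mul1r ?mulr0 ?mul0r.
by apply: memv_suml => b _; rewrite !mul_in_T ?dualidem_in_T ?adjmx_in_T.
Qed.

Lemma rel_pattern u v u' v' : r u v != r u (mate y v) ->
  r y u' = r y u -> r y v' = r y v -> (r u' v' == r u v) = ((u' == u) == (v' == v)).
Proof.
move=> ne Eu Ev.
have Nv : (mate y v == v) = false by apply/negbTE; apply: contraNneq ne => ->.
have Nu : (mate y u == u) = false.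
  by apply/negbTE; apply: contraNneq ne => Eu'; rewrite -[X in _ == r X _]Eu' rel_mate_mate.
case/fiberP: Eu => ->; case/fiberP: Ev => ->; rewrite ?eqxx ?Nu ?Nv //=.
- by rewrite eq_sym (negbTE ne).
- by rewrite -{1}(mateK y v) rel_mate_mate eq_sym (negbTE ne).
- by rewrite rel_mate_mate eqxx.
Qed.

Lemma linked_product u v : r u v != r u (mate y v) ->
  dualidem F r y (r y u) * adjmx F y r (r u v) * dualidem F r y (r y v) =
  matching (r y u) (r y v) (is_rep u != is_rep v).
Proof.
move=> ne.
have /andP[vu vv] : (valency y (r y u) == 2) && (valency y (r y v) == 2).
  by apply: linked_valency; apply/existsP; exists u; apply/existsP; exists v; rewrite !eqxx ne.
rewrite adjmxE dualidem_mul mul_dualidem; apply: eq_mx_of => u' v'; rewrite /in_matching.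
have [Eu|_] := eqVneq (r y u') (r y u); last by rewrite /= !mul0r.
have [Ev|_] := eqVneq (r y v') (r y v); last by rewrite /= mulr0.
rewrite /= mul1r mulr1 (rel_pattern ne Eu Ev) (eq_in_fiber vu Eu) (eq_in_fiber vv Ev).
by case: (is_rep u'); case: (is_rep u); case: (is_rep v'); case: (is_rep v).
Qed.

Lemma matching_in_T_linked a c s : linked y a c -> matching a c s \in T.
Proof.
move=> lac; have /andP[_ vc] := linked_valency lac.
case/existsP: lac => u /existsP[v /and3P[/eqP Eu /eqP Ev ne]]; subst a c.
have ne' : r u (mate y v) != r u (mate y (mate y v)) by rewrite mateK eq_sym.
have prod_in_T w : dualidem F r y (r y u) * adjmx F y r (r u w) * dualidem F r y (r y w) \in T.
  by rewrite !mul_in_T ?dualidem_in_T ?adjmx_in_T.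
have := prod_in_T v; have := prod_in_T (mate y v).
rewrite (linked_product ne) (linked_product ne') rel_mate (is_rep_mate vc).
by case: s; case: (is_rep u); case: (is_rep v).
Qed.

Lemma sum_fiber2 (G : X -> F) a : valency y a == 2 ->
  \sum_w (r y w == a)%:R * G w = G (rep a) + G (mate y (rep a)).
Proof.
move=> va; rewrite (bigID (fun w => r y w == a)) /= [X in _ + X]big1 ?addr0; last first.
  by move=> w /negbTE ->; rewrite mul0r.
rewrite (eq_bigl (fun w => r y w == r y (rep a))); last by move=> w; rewrite rel_rep.
rewrite (@big_fiber _ 0 +%R); move: va; rewrite -{1}(rel_rep a) -mate_neq => /negbTE ->.
by rewrite rel_mate rel_rep eqxx !mul1r.
Qed.

Lemma matching_mul a x z s : valency y x == 2 ->
  matching a x s * matching x z false = matching a z s.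
Proof.
move=> vx; rewrite mul_mx_of; apply: eq_mx_of => u v.
rewrite (eq_bigr (fun w => (r y w == x)%:R *
           ((in_matching a x s u w)%:R * (in_matching x z false w v)%:R))); last first.
  by move=> w _; rewrite /in_matching; case: (r y w == x); rewrite /= ?mul1r ?andbF ?mulr0.
have rx : is_rep (rep x) by rewrite /is_rep rel_rep.
have mx : is_rep (mate y (rep x)) = false by rewrite is_rep_mate ?rx ?rel_rep.
rewrite sum_fiber2 // /in_matching rel_mate rel_rep eqxx rx mx.
by case: (r y u == a); case: (r y v == z); case: (is_rep u); case: (is_rep v); case: s;
  rewrite /= ?mulr1n ?mulr0n ?mulr1 ?mul1r ?mulr0 ?mul0r ?addr0 ?add0r.
Qed.

Lemma matching_in_T a c s : twisted y a c -> matching a c s \in T.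
Proof.
case/and3P => va _ /connectP[p lp ->] {c}.
elim/last_ind: p lp => [_|p z IH] /=; first exact/matching_in_T_linked/linked_refl.
rewrite rcons_path last_rcons => /andP[lp lz].
have /andP[vx _] := linked_valency lz.
by rewrite -(matching_mul a z s vx) mul_in_T ?IH ?matching_in_T_linked.
Qed.

Lemma in_cell_of a c s u v : ((a, c, s) == cell_of u v) =
  [&& r y u == a, r y v == c & s == twisted y a c && (is_rep u != is_rep v)].
Proof.
rewrite /cell_of !xpair_eqE [a == _]eq_sym [c == _]eq_sym.
by case: (r y u =P a) => [->|_] //=; case: (r y v =P c) => [->|_] //=; rewrite andbF.
Qed.

Lemma cell_mx_in_T x : valid_cell x -> cell_mx x \in T.
Proof.
case: x => [[a c] s] valid.
have [tw|ntw] := boolP (twisted y a c).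
  rewrite (_ : cell_mx _ = matching a c s); first exact: matching_in_T.
  by apply: eq_mx_of => u v; rewrite in_cell_of /in_matching tw [s == _]eq_sym.
rewrite (_ : cell_mx _ = ones_block a c); first exact: ones_block_in_T.
move: valid; rewrite /valid_cell /= (negbTE ntw) orbF => /negbTE ->.
by apply: eq_mx_of => u v; rewrite in_cell_of (negbTE ntw) /= andbT.
Qed.

Lemma span_cells_eq_T : T = <<cell_basis>>%VS.
Proof.
apply/eqP; rewrite eqEsubv T_sub_span_cells /=; apply/span_subvP => M /mapP[x].
by rewrite mem_filter => /andP[xv _] ->; apply: cell_mx_in_T.
Qed.

Lemma dim_terwilliger : terwilliger_dim F r y = count valid_cell (enum {: cell}).
Proof.
by rewrite /terwilliger_dim span_cells_eq_T (eqP cell_basis_free) size_map size_filter.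
Qed.

End TerwilligerAlgebra.
End QuasiThinScheme.

Theorem corollary4p7 (X : finType) (d : nat) (r : X -> X -> 'I_d.+1) :
  is_scheme r -> quasi_thin r ->
  forall (F1 F2 : fieldType) (y1 y2 : X),
    terwilliger_dim F1 r y1 = terwilliger_dim F2 r y2.
Proof.
move=> schemeS qthinS F1 F2 y1 y2.
rewrite (dim_terwilliger schemeS qthinS F1 y1) (dim_terwilliger schemeS qthinS F2 y2).
by apply: eq_count => x; rewrite /valid_cell (twisted_indep schemeS qthinS y1 y2).
Qed.
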